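(* For all $i_1,\dots,i_n\in\mathbb{N}_0$, $$\sum_{j=1}^{n-1}\frac{1}{2^j}\,\mathtt{m}\big(x_j^{2^{j+1}i_j}\big)+\frac{1}{2^{n-1}}\,\mathtt{m}\big(x_n^{2^ni_n}\big)-\mathtt{m}_{i_1,\dots,i_n}^2\in\operatorname{qm}(\emptyset,\emptyset).$$
   Context: Let $\mathbb{R}[\underline x]=\mathbb{R}[x_1,\dots,x_n]$, $\mathscr{M}=\mathbb{R}[\mathtt{m}_{i_1,\dots,i_n}\colon (i_1,\dots,i_n)\in\mathbb{N}_0^n]$ the polynomial ring in countably many indeterminates with $\mathtt{m}_{0,\dots,0}:=1$, $\mathscr{M}[\underline x]=\mathscr{M}\otimes_{\mathbb{R}}\mathbb{R}[\underline x]$, and $\mathtt{m}:\mathscr{M}[\underline x]\to\mathscr{M}$ the unique $\mathscr{M}$-linear map with $\mathtt{m}(x_1^{i_1}\cdots x_n^{i_n})=\mathtt{m}_{i_1,\dots,i_n}$. $\operatorname{qm}(\emptyset,\emptyset)$ is the quadratic module of $\mathscr{M}$ generated by $\{\mathtt{m}(f^2)\colon f\in\mathscr{M}[\underline x]\}$ (smallest subset of $\mathscr{M}$ containing $1$ and these elements, closed under addition and under multiplication by squares of elements of $\mathscr{M}$). *)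

From HB Require Import structures.
From mathcomp Require Import all_boot all_order all_algebra.
From mathcomp Require Import finmap monalg.
Set Implicit Arguments. Unset Strict Implicit. Unset Printing Implicit Defensive.
Import Order.TTheory GRing.Theory Num.Theory.
Local Open Scope ring_scope.

Definition nzidx (n : nat) := {a : n.-tuple nat | a != nseq_tuple n 0%N}.

(* The ring \mathscr M = R[m_a : a in N_0^n], with m_0 := 1: the polynomial
   ring in the indeterminates m_a for nonzero a. *)
Definition Mring (R : realFieldType) (n : nat) := {malg R[cmonom (nzidx n)]}.

Definition mvar (R : realFieldType) (n : nat) (a : n.-tuple nat) : Mring R n :=
  if insub a is Some b then << ucm (b : nzidx n) >> else 1.

Definition Mx (R : realFieldType) (n : nat) := {malg (Mring R n)[cmonom 'I_n]}.

Definition xvar (R : realFieldType) (n : nat) (j : 'I_n) : Mx R n := << ucm j >>.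

(* The M-linear map m : M[x] -> M with m(x^a) = m_a. *)
Definition mm (R : realFieldType) (n : nat) (f : Mx R n) : Mring R n :=
  \sum_(k <- msupp f) f@_k * mvar R [tuple (k : cmonom 'I_n) j | j < n].

Inductive qm (R : realFieldType) (n : nat) : Mring R n -> Prop :=
| qm_one : qm 1
| qm_gen (f : Mx R n) : qm (mm (f ^+ 2))
| qm_add (a b : Mring R n) : qm a -> qm b -> qm (a + b)
| qm_mulsq (c a : Mring R n) : qm a -> qm (c ^+ 2 * a).

From HB Require Import structures.
From mathcomp Require Import all_boot all_order all_algebra.
From mathcomp Require Import finmap monalg.
From mathcomp Require Import ring.
Set Implicit Arguments. Unset Strict Implicit. Unset Printing Implicit Defensive.
Import Order.TTheory GRing.Theory Num.Theory.
Local Open Scope ring_scope.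

(* Applying m to (x^a - x^b)^2 and to (x^a - m_a)^2 puts
   m_{2a} + m_{2b} - 2 m_{a+b} and m_{2a} - m_a^2 in qm, and qm is closed under
   scaling by 1/2 = (1/2)^2 + (1/2)^2.  With 0-based indices let
   T_k = 2^-k m(x_k^(2^(k+1) i_k) ... x_n^(2^(k+1) i_n)).  The first fact for
   a = 2^(k+1) i_k e_k and b = 2^(k+1) (i_(k+1) e_(k+1) + ... + i_n e_n), scaled by
   2^-(k+1), gives 2^-(k+1) m(x_k^(2^(k+2) i_k)) + T_(k+1) - T_k in qm.  Summing over
   k < n telescopes to the claimed sum plus T_n - T_0, and T_0 - m_i^2 is in qm by
   the second fact. *)

Section QuadraticModule.
Variables (R : realFieldType) (N : nat).

Lemma qm0 : qm (0 : Mring R N).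
Proof. by have := qm_mulsq 0 (qm_one R N); rewrite expr0n mul0r. Qed.

Lemma qm_sum (I : Type) (r : seq I) (P : pred I) (F : I -> Mring R N) :
  (forall j, P j -> qm (F j)) -> qm (\sum_(j <- r | P j) F j).
Proof. by move=> qmF; apply: big_ind => //; [exact: qm0 | exact: qm_add]. Qed.

Lemma qm_scale_half (a : Mring R N) : qm a -> qm ((2%:R^-1 : R) *: a).
Proof.
move=> qma; have -> : (2%:R^-1 : R) = 2%:R^-1 ^+ 2 + 2%:R^-1 ^+ 2 by field.
by rewrite scalerDl -mul_malgC rmorphXn; apply: qm_add; apply: qm_mulsq.
Qed.

Lemma qm_scale_inv_exp2 (a : Mring R N) k : qm a -> qm (((2 ^ k)%:R^-1 : R) *: a).
Proof.
move=> qma; elim: k => [|k IHk]; first by rewrite expn0 invr1 scale1r.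
by rewrite expnS natrM invfM -scalerA; apply: qm_scale_half.
Qed.

Lemma qm_telescope n (a : 'I_n -> Mring R N) (T : nat -> Mring R N) x :
  (forall j : 'I_n, qm (a j + T j.+1 - T j)) -> qm (T 0%N - x) ->
  qm (\sum_(j < n) a j + T n - x).
Proof.
move=> qm_step qm_first.
have := qm_add (qm_sum (index_enum 'I_n) (P := xpredT) (fun j _ => qm_step j)) qm_first.
rewrite sumrB big_split /= -(big_mkord xpredT (fun k => T k.+1)).
rewrite -(big_mkord xpredT T) -(addrA (\sum_(j < n) a j)) -sumrB telescope_sumr //.
by rewrite 2!addrA subrK.
Qed.

End QuadraticModule.

Section Moments.
Variables (R : realFieldType) (N : nat).

Definition moment (k : cmonom 'I_N) : Mring R N := mvar R [tuple k j | j < N].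

Lemma moment1 : moment mone = 1.
Proof.
rewrite /moment /mvar insubF //; apply/negbTE; rewrite negbK; apply/eqP.
by apply: eq_from_tnth => j; rewrite tnth_mktuple tnth_nseq cm1.
Qed.

Lemma mmD : {morph @mm R N : f g / f + g}.
Proof. exact: (@mmapD _ _ _ idfun moment). Qed.

Lemma mm_malgU (c : Mring R N) (a : cmonom 'I_N) : mm << c *g a >> = c * moment a.
Proof. exact: (@mmapU _ _ _ idfun moment). Qed.

Lemma malgUM (c d : Mring R N) (a b : cmonom 'I_N) :
  << c *g a >> * << d *g b >> = << c * d *g mmul a b >> :> Mx R N.
Proof. by rewrite malgM_def fgmulUU. Qed.

Lemma mm_malgUM (c d : Mring R N) (a b : cmonom 'I_N) :
  mm (<< c *g a >> * << d *g b >>) = c * d * moment (mmul a b).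
Proof. by rewrite malgUM mm_malgU. Qed.

(* The three products are hypotheses so that this lemma is used by [apply]: a
   rewrite inside a sum of distinct monomial products makes unification unfold
   the finitely supported functions underlying [malg], which is prohibitively
   slow. *)
Lemma mm_sqrD (f g : Mx R N) u v w :
  mm (f * f) = u -> mm (f * g) = v -> mm (g * g) = w ->
  mm ((f + g) ^+ 2) = u + v *+ 2 + w.
Proof. by move=> <- <- <-; rewrite sqrrD 2!expr2 !mmD mulr2n. Qed.

Lemma mm_sqrDU (c d : Mring R N) (a b : cmonom 'I_N) :
  mm ((<< c *g a >> + << d *g b >>) ^+ 2) =
  c * c * moment (mmul a a) + (c * d * moment (mmul a b)) *+ 2
  + d * d * moment (mmul b b).
Proof. by apply: mm_sqrD; apply: mm_malgUM. Qed.

Lemma qm_moment_var a : qm (moment (mmul a a) - moment a ^+ 2).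
Proof.
have := @qm_gen R N (<< 1 *g a >> + << - moment a *g mone >>).
by rewrite mm_sqrDU mulm1 mulm1 moment1; congr qm; ring.
Qed.

Lemma qm_moment_sqrB a b :
  qm (moment (mmul a a) + moment (mmul b b) - moment (mmul a b) *+ 2).
Proof.
have := @qm_gen R N (<< 1 *g a >> + << - 1 *g b >>).
by rewrite mm_sqrDU; congr qm; ring.
Qed.

Definition mon_of (E : 'I_N -> nat) : cmonom 'I_N :=
  [cmonom E j | j in [fset j | j : 'I_N]]%M.

Lemma mon_ofE E j : mon_of E j = E j.
Proof. by rewrite /mon_of cmE /= fsfunE in_fsetE. Qed.

Lemma mvar_moment (t : N.-tuple nat) : mvar R t = moment (mon_of (tnth t)).
Proof.
by rewrite /moment; congr mvar; apply: eq_from_tnth => j; rewrite tnth_mktuple mon_ofE.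
Qed.

Lemma xvarX (j : 'I_N) (e : nat) :
  xvar R j ^+ e = << mon_of (fun l => e * (j == l))%N >>.
Proof.
elim: e => [|e IHe].
  by rewrite expr0; congr << _ >>; apply/eqP/cmP => l; rewrite mon_ofE cm1.
rewrite exprSr IHe /xvar malgUM mulr1; congr << _ >>.
by apply/eqP/cmP => l; rewrite cmM !mon_ofE ucmE mulSnr.
Qed.

Lemma mm_xvarX (j : 'I_N) (e : nat) :
  mm (xvar R j ^+ e) = moment (mon_of (fun l => e * (j == l))%N).
Proof. by rewrite xvarX mm_malgU mul1r. Qed.

End Moments.

Lemma inv_exp2S_mul2n (R : realFieldType) k :
  ((2 ^ k.+1)%:R^-1 : R) *+ 2 = (2 ^ k)%:R^-1.
Proof.
have pk : ((2 ^ k)%:R : R) != 0 by rewrite pnatr_eq0 expn_eq0.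
by rewrite expnS natrM; field.
Qed.

Section TailMoments.
Variables (R : realFieldType) (n : nat) (i : n.+1.-tuple nat).

Definition tail_mon (k : nat) : cmonom 'I_n.+1 :=
  mon_of (fun l => if k <= l then 2 ^ k.+1 * tnth i l else 0)%N.

Definition tail_moment (k : nat) : Mring R n.+1 :=
  ((2 ^ k)%:R^-1 : R) *: moment R (tail_mon k).

Lemma tail_mon0 : tail_mon 0 = mmul (mon_of (tnth i)) (mon_of (tnth i)).
Proof. by apply/eqP/cmP => l; rewrite cmM !mon_ofE leq0n expn1 mul2n addnn. Qed.

Lemma tail_mon_max :
  tail_mon n = mon_of (fun l => 2 ^ n.+1 * tnth i ord_max * (ord_max == l))%N.
Proof.
apply/eqP/cmP => l; rewrite !mon_ofE; case: (eqVneq ord_max l) => [<-|ne].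
  by rewrite leqnn muln1.
rewrite muln0 leqNgt ltn_neqAle -ltnS ltn_ord andbT eq_sym.
by move: ne; rewrite -(inj_eq val_inj) => ->.
Qed.

Lemma qm_tail_moment_step (j : 'I_n) :
  qm (((2 ^ j.+1)%:R^-1 : R) *:
        moment R (mon_of (fun l => 2 ^ j.+2 * tnth i (widen_ord (leqnSn n) j)
                                   * (widen_ord (leqnSn n) j == l)))%N
      + tail_moment j.+1 - tail_moment j).
Proof.
set w := widen_ord (leqnSn n) j.
pose a := mon_of (fun l => 2 ^ j.+1 * tnth i w * (w == l))%N.
pose b := mon_of (fun l => if j < l then 2 ^ j.+1 * tnth i l else 0)%N.
have aa : mmul a a = mon_of (fun l => 2 ^ j.+2 * tnth i w * (w == l))%N.
  by apply/eqP/cmP => l; rewrite cmM !mon_ofE addnn -!mul2n !mulnA -expnS.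
have bb : mmul b b = tail_mon j.+1.
  apply/eqP/cmP => l; rewrite cmM !mon_ofE.
  by case: ifP; rewrite // addnn -mul2n mulnA -expnS.
have ab : mmul a b = tail_mon j.
  apply/eqP/cmP => l; rewrite cmM !mon_ofE; case: (eqVneq w l) => [<-|ne].
    by rewrite /= ltnn leqnn muln1 addn0.
  have : j != l :> nat by move: ne; rewrite -(inj_eq val_inj).
  by rewrite muln0 add0n [(j <= l)%N]leq_eqVlt => /negbTE ->.
have := qm_scale_inv_exp2 j.+1 (qm_moment_sqrB R a b).
rewrite aa bb ab /tail_moment -(inv_exp2S_mul2n R j).
by rewrite -scalerMnl scalerMnr -scalerDr -scalerBr.
Qed.

End TailMoments.

Theorem lemma6p4 (R : realFieldType) (n : nat) (i : n.+1.-tuple nat) :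
  qm (\sum_(j < n)
        ((2 ^ j.+1)%:R^-1 : R) *:
          mm (xvar R (widen_ord (leqnSn n) j) ^+ (2 ^ j.+2 * tnth i (widen_ord (leqnSn n) j)))
      + ((2 ^ n)%:R^-1 : R) *: mm (xvar R ord_max ^+ (2 ^ n.+1 * tnth i ord_max))
      - mvar R i ^+ 2).
Proof.
under eq_bigr do rewrite mm_xvarX.
rewrite mm_xvarX -tail_mon_max -/(tail_moment R i n).
apply: (qm_telescope (T := tail_moment R i)) => [j|]; first exact: qm_tail_moment_step.
by rewrite mvar_moment /tail_moment expn0 invr1 scale1r tail_mon0; apply: qm_moment_var.
Qed.
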